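(* Let $\mathcal A$ be a unital algebra with unit $\mathbf 1$ and let $(\mathbf R_n)_{n\in\mathbb Z}$ be invertible elements of $\mathcal A$ satisfying $$\mathbf R_{n+1}\mathbf R_n^{-1}\mathbf R_{n-1}=\mathbf R_n+\mathbf R_n^{-1}\qquad(n\in\mathbb Z).$$ Then $\mathbf C:=\mathbf R_{n+1}^{-1}\mathbf R_n\mathbf R_{n+1}\mathbf R_n^{-1}$ is independent of $n$, and $$\mathbf K:=(\mathbf R_{n+1}+\mathbf C\mathbf R_{n-1})\mathbf R_n^{-1}=\mathbf R_n^{-1}(\mathbf R_{n+1}\mathbf C+\mathbf R_{n-1})$$ (the two expressions being equal for each $n$) is also independent of $n$. *)

From HB Require Import structures.
From mathcomp Require Import all_boot all_order all_algebra.
Set Implicit Arguments. Unset Strict Implicit. Unset Printing Implicit Defensive.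
Import Order.TTheory GRing.Theory Num.Theory.
Local Open Scope ring_scope.

Definition Cseq (A : unitRingType) (R : int -> A) (n : int) : A :=
  (R (n + 1))^-1 * R n * R (n + 1) * (R n)^-1.

Definition Kseq (A : unitRingType) (R : int -> A) (n : int) : A :=
  (R (n + 1) + Cseq R n * R (n - 1)) * (R n)^-1.

Definition Kseq' (A : unitRingType) (R : int -> A) (n : int) : A :=
  (R n)^-1 * (R (n + 1) * Cseq R n + R (n - 1)).

(* Put X_n := R_n + R_n^-1, which commutes with R_n.  The recurrence can be
   solved for the two "mixed quotients" R_{n+1} R_n^-1 = X_n R_{n-1}^-1 and
   R_n^-1 R_{n-1} = R_{n+1}^-1 X_n.  Substituting these into C_n and C_{n-1}
   and moving X_n past R_n shows C_n = C_{n-1}.  Both expressions for K_n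
   collapse to R_{n+1} R_n^-1 + R_n^-1 R_{n-1}, and expanding X_{n+1} and X_n
   in the mixed quotients shows that this sum does not change from n to n+1. *)
From HB Require Import structures.
From mathcomp Require Import all_boot all_order all_algebra.
Set Implicit Arguments. Unset Strict Implicit.
Import GRing.Theory.
Local Open Scope ring_scope.

Lemma int_shift_invariant_const (T : Type) (f : int -> T) :
  (forall n, f (n + 1) = f n) -> forall n, f n = f 0.
Proof.
move=> f_shift [k|k].
  elim: k => // k IHk.
  by rewrite -addn1 PoszD f_shift.
elim: k => [|k IHk]; first by rewrite -(f_shift (Negz 0)).
rewrite -IHk -(f_shift (Negz k.+1)); congr f.
by rewrite !NegzE -[k.+2]addn1 PoszD opprD addrNK.
Qed.

Section ThreeTermRecurrence.
Variables (A : unitRingType) (a b c : A).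
Hypotheses (ua : a \is a GRing.unit) (ub : b \is a GRing.unit)
  (uc : c \is a GRing.unit).
Hypothesis rec : c * b^-1 * a = b + b^-1.

Lemma comm_add_inv : GRing.comm b (b + b^-1).
Proof. by rewrite /GRing.comm mulrDr mulrDl mulrV // mulVr. Qed.

Lemma rec_mulrV : c * b^-1 = (b + b^-1) * a^-1.
Proof. by rewrite -rec mulrK. Qed.

Lemma rec_mulVr : b^-1 * a = c^-1 * (b + b^-1).
Proof. by rewrite -rec -!mulrA mulKr. Qed.

Lemma rec_conj : c^-1 * b * c * b^-1 = b^-1 * a * b * a^-1.
Proof.
rewrite -(mulrA _ c) rec_mulrV rec_mulVr -!mulrA; congr (_ * _).
by rewrite !mulrA comm_add_inv.
Qed.

Lemma rec_K_left : (c + c^-1 * b * c * b^-1 * a) * b^-1 = c * b^-1 + b^-1 * a.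
Proof. by rewrite rec_conj mulrVK // mulrDl mulrK. Qed.

Lemma rec_K_right : b^-1 * (c * (c^-1 * b * c * b^-1) + a) = c * b^-1 + b^-1 * a.
Proof. by rewrite !mulrA divrr // mul1r mulrDr !mulrA mulVr // mul1r. Qed.

End ThreeTermRecurrence.

Lemma rec_quotient_sum_shift (A : unitRingType) (a b c d : A) :
  b \is a GRing.unit -> c \is a GRing.unit ->
  c * b^-1 * a = b + b^-1 -> d * c^-1 * b = c + c^-1 ->
  d * c^-1 + c^-1 * b = c * b^-1 + b^-1 * a.
Proof.
move=> ub uc rec_b rec_c.
rewrite (rec_mulrV ub rec_c) (rec_mulVr uc rec_b) mulrDl mulrDr -addrA.
by rewrite [_ * b + _]addrC.
Qed.

Section InvertibleRecurrence.
Variables (A : unitRingType) (R : int -> A).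
Hypothesis hunit : forall n, R n \is a GRing.unit.
Hypothesis hrec : forall n, R (n + 1) * (R n)^-1 * R (n - 1) = R n + (R n)^-1.

Lemma hrec_succ n : R (n + 1 + 1) * (R (n + 1))^-1 * R n = R (n + 1) + (R (n + 1))^-1.
Proof. by have := hrec (n + 1); rewrite addrK. Qed.

Lemma Cseq_succ n : Cseq R (n + 1) = Cseq R n.
Proof. exact: rec_conj (hunit _) (hunit _) (hunit _) (hrec_succ n). Qed.

Lemma Kseq_quotients n : Kseq R n = R (n + 1) * (R n)^-1 + (R n)^-1 * R (n - 1).
Proof. exact: rec_K_left (hunit _) (hunit _) (hunit _) (hrec n). Qed.

Lemma Kseq'_quotients n : Kseq' R n = R (n + 1) * (R n)^-1 + (R n)^-1 * R (n - 1).
Proof. exact: rec_K_right (hunit _) (hunit _). Qed.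

Lemma Kseq_succ n : Kseq R (n + 1) = Kseq R n.
Proof.
rewrite !Kseq_quotients addrK.
exact: rec_quotient_sum_shift (hunit _) (hunit _) (hrec n) (hrec_succ n).
Qed.

End InvertibleRecurrence.

Theorem mainTheorem11 (A : unitRingType) (R : int -> A)
  (hunit : forall n : int, R n \is a GRing.unit)
  (hrec : forall n : int, R (n + 1) * (R n)^-1 * R (n - 1) = R n + (R n)^-1) :
  (forall n : int, Cseq R n = Cseq R 0) /\
  (forall n : int, Kseq R n = Kseq' R n) /\
  (forall n : int, Kseq R n = Kseq R 0).
Proof.
split; last split.
- exact/int_shift_invariant_const/(Cseq_succ hunit hrec).
- by move=> n; rewrite (Kseq_quotients hunit hrec) (Kseq'_quotients hunit).
- exact/int_shift_invariant_const/(Kseq_succ hunit hrec).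
Qed.
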